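(* Let $n\ge1$, $p\in\,]1,2[$, $k_3>0$, and define $\phi_1,\phi_2:\mathbb{R}^n\to\mathbb{R}^n$ by $$\phi_1(e_1)=k_3e_1+(e_1^\top e_1)^{\frac{1-p}{3p-2}}e_1,$$ $$\phi_2(e_1)=k_3^2e_1+\frac{2k_3(2p-1)}{3p-2}(e_1^\top e_1)^{\frac{1-p}{3p-2}}e_1+\frac{p}{3p-2}(e_1^\top e_1)^{\frac{2(1-p)}{3p-2}}e_1.$$ Let $k_1,k_2>0$ be such that $\mathcal{A}^*=\begin{bmatrix}-k_1&1\\-k_2&0\end{bmatrix}$ is Hurwitz, let $\mathcal{Q}^*\in\mathbb{R}^{2\times2}$ be symmetric positive definite, and let $\mathcal{P}^*\succ0$ be the unique solution of $(\mathcal{A}^* )^\top\mathcal{P}^*+\mathcal{P}^*\mathcal{A}^*=-\mathcal{Q}^*$. Set $\gamma_1=k_3\lambda_{\min}\{\mathcal{Q}^*\}/\lambda_{\max}\{\mathcal{P}^*\}$. Consider the system under measurement noise $\mu\in\mathbb{R}^n$ with $\|\mu\|\le\bar\mu$: $$\dot e_1=-k_1\phi_1(e_1+\mu)+e_2,\qquad \dot e_2=-k_2\phi_2(e_1+\mu).$$ If $\gamma_1\ge\lambda_{\max}\{\mathcal{P}^*\}/\lambda_{\min}\{\mathcal{P}^*\}$, then this system is practically finite-time stable at the origin.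
   Context: $\lambda_{\min}(\cdot),\lambda_{\max}(\cdot)$ denote the minimum and maximum eigenvalues of a symmetric matrix. A system is practically finite-time stable (PFTS) at the origin if its solutions converge in finite time to a bounded neighbourhood of the origin; specifically, this is certified by a positive definite $V$ with $\dot V\le-\lambda_1V-\lambda_2V^\alpha+\eta$ ($\lambda_1,\lambda_2,\eta>0$, $\alpha\in]0,1[$), in which case solutions reach in finite time the set $\{V\le\min\{\frac{\eta}{(1-\theta_0)\lambda_1},(\frac{\eta}{(1-\theta_0)\lambda_2})^{1/\alpha}\}\}$ for any $\theta_0\in]0,1[$. *)

From mathcomp Require Import all_boot all_order all_algebra.
From mathcomp Require Import all_classical all_reals all_analysis.
From mathcomp Require Import complex.
Set Implicit Arguments. Unset Strict Implicit. Unset Printing Implicit Defensive.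
Import Order.TTheory GRing.Theory Num.Theory.
Local Open Scope ring_scope.

Section Defs.
Variable R : realType.

(* e^T e for a vector e of R^n, represented as a row vector e (so e *m e^T). *)
Definition sqnorm (n : nat) (e : 'rV[R]_n) : R := (e *m e^T) 0 0.

Definition enorm (n : nat) (e : 'rV[R]_n) : R := Num.sqrt (sqnorm e).

Definition state_norm (n : nat) (e1 e2 : 'rV[R]_n) : R :=
  Num.sqrt (sqnorm e1 + sqnorm e2).

Definition expo (p : R) : R := (1 - p) / (3 * p - 2).

Definition phi1 (n : nat) (k3 p : R) (e : 'rV[R]_n) : 'rV[R]_n :=
  k3 *: e + (sqnorm e `^ expo p) *: e.

Definition phi2 (n : nat) (k3 p : R) (e : 'rV[R]_n) : 'rV[R]_n :=
  (k3 ^+ 2) *: e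
  + ((2 * k3 * (2 * p - 1)) / (3 * p - 2) * sqnorm e `^ expo p) *: e
  + (p / (3 * p - 2) * sqnorm e `^ (2 * expo p)) *: e.

(* A^* = [[-k1, 1], [-k2, 0]] *)
Definition Astar (k1 k2 : R) : 'M[R]_2 :=
  \matrix_(i < 2, j < 2)
    (if (i == 0) && (j == 0) then - k1
     else if (i == 0) then 1
     else if (j == 0) then - k2 else 0).

Definition hurwitz (m : nat) (A : 'M[R]_m) : Prop :=
  forall z : R[i], eigenvalue (map_mx (fun x : R => (x%:C)%C) A) z -> complex.Re z < 0.

Definition posdef (m : nat) (M : 'M[R]_m) : Prop :=
  M^T = M /\ forall v : 'rV[R]_m, v != 0 -> 0 < (v *m M *m v^T) 0 0.

Definition is_lambda_min (m : nat) (M : 'M[R]_m) (l : R) : Prop :=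
  eigenvalue M l /\ forall y, eigenvalue M y -> l <= y.
Definition is_lambda_max (m : nat) (M : 'M[R]_m) (l : R) : Prop :=
  eigenvalue M l /\ forall y, eigenvalue M y -> y <= l.

Definition is_solution (n : nat) (k1 k2 k3 p : R) (mu : R -> 'rV[R]_n)
  (e1 e2 : R -> 'rV[R]_n) : Prop :=
  forall t : R, 0 < t -> forall i : 'I_n,
    is_derive t 1 (fun s => e1 s 0 i)
      ((- k1 *: phi1 k3 p (e1 t + mu t) + e2 t) 0 i) /\
    is_derive t 1 (fun s => e2 s 0 i)
      ((- k2 *: phi2 k3 p (e1 t + mu t)) 0 i).

Definition PFTS (n : nat) (k1 k2 k3 p mubar : R) : Prop :=
  exists r : R, 0 < r /\
    forall mu : R -> 'rV[R]_n, (forall t, 0 <= t -> enorm (mu t) <= mubar) ->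
    forall e1 e2 : R -> 'rV[R]_n, is_solution k1 k2 k3 p mu e1 e2 ->
    exists T : R, 0 <= T /\ forall t, T <= t -> state_norm (e1 t) (e2 t) <= r.

End Defs.

(* In the coordinates z = (k3 e1, e2) the error dynamics read z' = k3 A* z + d,
   where d collects the noise and the fractional-power terms of phi1 and phi2.
   For V = sum_i z_i P z_i^T the Lyapunov equation and Young's inequality give
   V' <= -(k3 qm / 2) |z|^2 + C |d|^2, with qm a coercivity constant of Q.
   As 1 < p < 2, |d|^2 <= C' (|mu|^2 + s^b1 + s^b2) with s = |e1 + mu|^2 and
   exponents b1, b2 in ]0, 1[, so the perturbation is dominated by the linear
   decay up to a constant: V' + c V <= K. Comparison with the linear equation
   then bounds V, hence |(e1, e2)|, uniformly after a finite time. *)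

From mathcomp Require Import all_boot all_order all_algebra.
From mathcomp Require Import all_classical all_reals all_analysis.
From mathcomp Require Import complex.
From mathcomp Require Import ring lra.
Import Order.TTheory GRing.Theory Num.Theory.
Local Open Scope ring_scope.

Section QuadraticForm2.
Context {R : realType}.
Implicit Types (M : 'M[R]_2) (a b u v x y : R).

Definition row2 x y : 'rV[R]_2 := \row_(j < 2) (if j == 0 then x else y).

Definition qf2 M x y := M 0 0 * x ^+ 2 + 2 * M 0 1 * x * y + M 1 1 * y ^+ 2.

(* For symmetric [M], the derivative of [qf2 M] at [(x, y)] along [(u, v)]. *)
Definition dqf2 M x y u v :=
  2 * (M 0 0 * x + M 0 1 * y) * u + 2 * (M 0 1 * x + M 1 1 * y) * v.

Lemma ord2_max : (ord_max : 'I_2) = 1. Proof. exact/val_inj. Qed.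

Lemma ord2_widen_max : widen_ord (leqnSn 1) (ord_max : 'I_1) = 0 :> 'I_2.
Proof. exact/val_inj. Qed.

Lemma qf2E M x y : M 1 0 = M 0 1 ->
  (row2 x y *m M *m (row2 x y)^T) 0 0 = qf2 M x y.
Proof.
move=> Msym; rewrite !mxE !big_ord_recr big_ord0 /= !mxE !big_ord_recr !big_ord0.
by rewrite /= !mxE ord2_max ord2_widen_max /= Msym /qf2; ring.
Qed.

Lemma row2_eq0 x y : (row2 x y == 0) = (x == 0) && (y == 0).
Proof.
apply/eqP/andP => [/matrixP r0 | [/eqP-> /eqP->]].
  by split; apply/eqP; [have := r0 0 0 | have := r0 0 1]; rewrite !mxE.
by apply/matrixP => i j; rewrite !mxE; case: ifP.
Qed.

Lemma posdef2_sym M : posdef M -> M 1 0 = M 0 1.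
Proof. by case=> MT _; rewrite -{1}MT mxE. Qed.

Lemma posdef2_qf2_gt0 M x y : posdef M -> (x != 0) || (y != 0) -> 0 < qf2 M x y.
Proof.
move=> Mpos xy0; have [_ Mgt0] := Mpos.
rewrite -qf2E ?posdef2_sym //; apply: Mgt0.
by rewrite row2_eq0 negb_and.
Qed.

Lemma posdef2_coercive M : posdef M ->
  exists2 m, 0 < m & forall x y, m * (x ^+ 2 + y ^+ 2) <= qf2 M x y.
Proof.
move=> Mpos.
have a0 : 0 < M 0 0.
  have -> : M 0 0 = qf2 M 1 0 by rewrite /qf2; ring.
  by apply: posdef2_qf2_gt0; rewrite ?oner_eq0.
have c0 : 0 < M 1 1.
  have -> : M 1 1 = qf2 M 0 1 by rewrite /qf2; ring.
  by apply: posdef2_qf2_gt0; rewrite ?oner_eq0 ?orbT.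
have det0 : 0 < M 0 0 * M 1 1 - M 0 1 ^+ 2.
  have := posdef2_qf2_gt0 _ (M 0 1) (- M 0 0) Mpos.
  rewrite oppr_eq0 (gt_eqF a0) orbT => /(_ isT).
  have -> : qf2 M (M 0 1) (- M 0 0) = M 0 0 * (M 0 0 * M 1 1 - M 0 1 ^+ 2).
    by rewrite /qf2; ring.
  by rewrite pmulr_rgt0.
exists ((M 0 0 * M 1 1 - M 0 1 ^+ 2) / (M 0 0 + M 1 1)) => [|x y].
  by rewrite divr_gt0 // addr_gt0.
rewrite mulrAC ler_pdivrMr ?addr_gt0 // -subr_ge0.
have -> : qf2 M x y * (M 0 0 + M 1 1) - (M 0 0 * M 1 1 - M 0 1 ^+ 2) * (x ^+ 2 + y ^+ 2)
    = (M 0 0 * x + M 0 1 * y) ^+ 2 + (M 0 1 * x + M 1 1 * y) ^+ 2.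
  by rewrite /qf2; ring.
by rewrite addr_ge0 ?sqr_ge0.
Qed.

Lemma ler_sqrD_2mul x y : `|2 * x * y| <= x ^+ 2 + y ^+ 2.
Proof.
rewrite ler_norml; apply/andP; split; rewrite -subr_ge0.
  have -> : 2 * x * y - - (x ^+ 2 + y ^+ 2) = (x + y) ^+ 2 by ring.
  exact: sqr_ge0.
have -> : x ^+ 2 + y ^+ 2 - 2 * x * y = (x - y) ^+ 2 by ring.
exact: sqr_ge0.
Qed.

Lemma qf2_le_norm M x y :
  qf2 M x y <= (`|M 0 0| + `|M 0 1| + `|M 1 1|) * (x ^+ 2 + y ^+ 2).
Proof.
have h0 : M 0 0 * x ^+ 2 <= `|M 0 0| * x ^+ 2 by rewrite ler_wpM2r ?sqr_ge0 ?ler_norm.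
have h1 : M 1 1 * y ^+ 2 <= `|M 1 1| * y ^+ 2 by rewrite ler_wpM2r ?sqr_ge0 ?ler_norm.
have hxy : 2 * M 0 1 * x * y <= `|M 0 1| * (x ^+ 2 + y ^+ 2).
  rewrite (_ : _ * x * y = M 0 1 * (2 * x * y)); last by ring.
  by rewrite (le_trans (ler_norm _)) // normrM ler_wpM2l ?ler_sqrD_2mul.
have := mulr_ge0 (normr_ge0 (M 0 0)) (sqr_ge0 y).
have := mulr_ge0 (normr_ge0 (M 1 1)) (sqr_ge0 x).
rewrite /qf2; lra.
Qed.

Lemma mul2_le_young a u d : 0 < d -> 2 * a * u <= d * a ^+ 2 + u ^+ 2 / d.
Proof.
move=> d0; rewrite -subr_ge0.
have -> : d * a ^+ 2 + u ^+ 2 / d - 2 * a * u = (d * a - u) ^+ 2 / d.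
  by field; rewrite gt_eqF.
by rewrite divr_ge0 ?sqr_ge0 ?ltW.
Qed.

Lemma dqf2_le_young M x y u v eps : 0 < eps ->
  dqf2 M x y u v <= eps * (x ^+ 2 + y ^+ 2)
    + (M 0 0 ^+ 2 + 2 * M 0 1 ^+ 2 + M 1 1 ^+ 2 + 1) / eps * (u ^+ 2 + v ^+ 2).
Proof.
move=> eps0; set L := _ + 1.
have L0 : 0 < L.
  by have := sqr_ge0 (M 0 0); have := sqr_ge0 (M 0 1); have := sqr_ge0 (M 1 1); rewrite /L; lra.
set a := M 0 0 * x + M 0 1 * y; set b := M 0 1 * x + M 1 1 * y.
have ab : a ^+ 2 + b ^+ 2 <= L * (x ^+ 2 + y ^+ 2).
  rewrite -subr_ge0.
  have -> : L * (x ^+ 2 + y ^+ 2) - (a ^+ 2 + b ^+ 2) =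
      (M 0 0 * y - M 0 1 * x) ^+ 2 + (M 0 1 * y - M 1 1 * x) ^+ 2 + (x ^+ 2 + y ^+ 2).
    by rewrite /L /a /b; ring.
  by rewrite !addr_ge0 ?sqr_ge0.
have d0 : 0 < eps / L by rewrite divr_gt0.
have := mul2_le_young a u _ d0; have := mul2_le_young b v _ d0.
have -> : u ^+ 2 / (eps / L) = L / eps * u ^+ 2 by field; rewrite !gt_eqF.
have -> : v ^+ 2 / (eps / L) = L / eps * v ^+ 2 by field; rewrite !gt_eqF.
have : eps / L * a ^+ 2 + eps / L * b ^+ 2 <= eps * (x ^+ 2 + y ^+ 2).
  by rewrite -mulrDr (le_trans (ler_wpM2l (ltW d0) ab)) // mulrA divfK ?gt_eqF.
rewrite /dqf2 -/a -/b mulrDr; lra.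
Qed.

End QuadraticForm2.

Section SquaredNorm.
Context {R : realType} {n : nat}.
Implicit Types (u v : 'rV[R]_n).

Lemma sqnormE v : sqnorm v = \sum_(i < n) v 0 i ^+ 2.
Proof. by rewrite /sqnorm !mxE; apply: eq_bigr => i _; rewrite mxE expr2. Qed.

Lemma sqnorm_ge0 v : 0 <= sqnorm v.
Proof. by rewrite sqnormE sumr_ge0 // => i _; rewrite sqr_ge0. Qed.

Lemma sqnormZ (a : R) v : sqnorm (a *: v) = a ^+ 2 * sqnorm v.
Proof.
by rewrite !sqnormE mulr_sumr; apply: eq_bigr => i _; rewrite mxE exprMn.
Qed.

Lemma sqnormD_le u v : sqnorm (u + v) <= 2 * sqnorm u + 2 * sqnorm v.
Proof.
rewrite !sqnormE !mulr_sumr -big_split /=; apply: ler_sum => i _.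
rewrite mxE -subr_ge0.
have -> : 2 * u 0 i ^+ 2 + 2 * v 0 i ^+ 2 - (u 0 i + v 0 i) ^+ 2 = (u 0 i - v 0 i) ^+ 2.
  by ring.
exact: sqr_ge0.
Qed.

Lemma sqnorm_le_sqr v (b : R) : enorm v <= b -> sqnorm v <= b ^+ 2.
Proof.
move=> vb; rewrite -(sqr_sqrtr (sqnorm_ge0 v)) ler_pXn2r ?nnegrE ?sqrtr_ge0 //.
exact: le_trans (sqrtr_ge0 _) vb.
Qed.

End SquaredNorm.

Lemma state_norm_le {R : realType} {n : nat} (k m B : R) (e1 e2 : 'rV[R]_n) :
  k != 0 -> 0 < m -> m * (sqnorm (k *: e1) + sqnorm e2) <= B ->
  state_norm e1 e2 <= Num.sqrt (B / (m * Num.min (k ^+ 2) 1)).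
Proof.
move=> k0 m0 eB; set l := Num.min (k ^+ 2) 1.
have l0 : 0 < l by rewrite lt_min ltr01 andbT exprn_even_gt0.
have e1_ge0 := sqnorm_ge0 e1; have e2_ge0 := sqnorm_ge0 e2.
have ml : m * l * (sqnorm e1 + sqnorm e2) <= B.
  apply: le_trans eB; rewrite -mulrA ler_wpM2l ?(ltW m0) // sqnormZ mulrDr.
  rewrite lerD //; first by rewrite ler_wpM2r // ge_min lexx.
  by rewrite -[X in _ <= X]mul1r ler_wpM2r // ge_min lexx orbT.
rewrite /state_norm ler_sqrt; last first.
  by rewrite divr_ge0 ?(le_trans _ ml) ?mulr_ge0 ?addr_ge0 ?(ltW m0) ?(ltW l0).
by rewrite ler_pdivlMr ?mulr_gt0 // mulrC.
Qed.

Section LyapunovFunction.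
Context {R : realType} {n : nat}.
Variable P : 'M[R]_2.
Implicit Types (x y u v : 'rV[R]_n).

Definition lyapV x y := \sum_(i < n) qf2 P (x 0 i) (y 0 i).

Definition dlyapV x y u v := \sum_(i < n) dqf2 P (x 0 i) (y 0 i) (u 0 i) (v 0 i).

Lemma lyapV_le_norm x y :
  lyapV x y <= (`|P 0 0| + `|P 0 1| + `|P 1 1|) * (sqnorm x + sqnorm y).
Proof.
rewrite !sqnormE -big_split mulr_sumr; apply: ler_sum => i _.
exact: qf2_le_norm.
Qed.

Lemma lyapV_ge_norm (m : R) x y :
  (forall a b, m * (a ^+ 2 + b ^+ 2) <= qf2 P a b) ->
  m * (sqnorm x + sqnorm y) <= lyapV x y.
Proof.
move=> Pcoer; rewrite !sqnormE -big_split mulr_sumr; apply: ler_sum => i _.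
exact: Pcoer.
Qed.

Lemma is_derive_lyapV (x y : R -> 'rV[R]_n) (u v : 'rV[R]_n) (t : R) :
  (forall i, is_derive t 1 (fun s => x s 0 i) (u 0 i)) ->
  (forall i, is_derive t 1 (fun s => y s 0 i) (v 0 i)) ->
  is_derive t 1 (fun s => lyapV (x s) (y s)) (dlyapV (x t) (y t) u v).
Proof.
move=> dx dy.
have -> : (fun s => lyapV (x s) (y s)) =
    \sum_(i < n) (fun s => qf2 P (x s 0 i) (y s 0 i)).
  by apply/funext => s; rewrite fct_sumE.
apply: is_derive_sum => i.
have -> : (fun s => qf2 P (x s 0 i) (y s 0 i)) =
    P 0 0 *: ((fun s => x s 0 i) * (fun s => x s 0 i))
    + (2 * P 0 1) *: ((fun s => x s 0 i) * (fun s => y s 0 i))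
    + P 1 1 *: ((fun s => y s 0 i) * (fun s => y s 0 i)).
  by apply/funext => s; rewrite /qf2 !fctE /GRing.scale /=; ring.
have := is_deriveD (is_deriveD (is_deriveZ (P 0 0) (is_deriveM (dx i) (dx i)))
  (is_deriveZ (2 * P 0 1) (is_deriveM (dx i) (dy i))))
  (is_deriveZ (P 1 1) (is_deriveM (dy i) (dy i))).
by move=> h; apply: is_derive_eq h _; rewrite /dqf2 /GRing.scale /=; ring.
Qed.

End LyapunovFunction.

Section PerturbedLyapunov.
Context {R : realType}.
Variables (k1 k2 qm : R) (P Q : 'M[R]_2).
Hypothesis P_sym : P 1 0 = P 0 1.
Hypothesis lyapPQ : (Astar k1 k2)^T *m P + P *m Astar k1 k2 = - Q.
Hypothesis Q_coercive : forall x y : R, qm * (x ^+ 2 + y ^+ 2) <= qf2 Q x y.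

Lemma dqf2_Astar x y : dqf2 P x y (- k1 * x + y) (- k2 * x) = - qf2 Q x y.
Proof.
have Qij i j : Q i j = - ((Astar k1 k2)^T *m P + P *m Astar k1 k2) i j.
  by rewrite lyapPQ mxE opprK.
rewrite /qf2 !Qij !mxE !big_ord_recr !big_ord0 /= !mxE ord2_max ord2_widen_max /=.
by rewrite P_sym /dqf2; ring.
Qed.

Lemma dqf2_perturbed_le (k3 eps x y d1 d2 : R) : 0 <= k3 -> 0 < eps ->
  dqf2 P x y (k3 * (- k1 * x + y) + d1) (k3 * (- k2 * x) + d2)
    <= - (k3 * qm - eps) * (x ^+ 2 + y ^+ 2)
       + (P 0 0 ^+ 2 + 2 * P 0 1 ^+ 2 + P 1 1 ^+ 2 + 1) / eps * (d1 ^+ 2 + d2 ^+ 2).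
Proof.
move=> k3_ge0 eps0.
have -> : dqf2 P x y (k3 * (- k1 * x + y) + d1) (k3 * (- k2 * x) + d2)
    = k3 * dqf2 P x y (- k1 * x + y) (- k2 * x) + dqf2 P x y d1 d2.
  by rewrite /dqf2; ring.
have := dqf2_le_young P x y d1 d2 eps eps0.
have := ler_wpM2l k3_ge0 (Q_coercive x y).
rewrite dqf2_Astar; lra.
Qed.

Lemma dlyapV_perturbed_le {n} (k3 eps : R) (x y d1 d2 : 'rV[R]_n) :
  0 <= k3 -> 0 < eps ->
  dlyapV P x y (k3 *: (- k1 *: x + y) + d1) (k3 *: (- k2 *: x) + d2)
    <= - (k3 * qm - eps) * (sqnorm x + sqnorm y)
       + (P 0 0 ^+ 2 + 2 * P 0 1 ^+ 2 + P 1 1 ^+ 2 + 1) / eps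
         * (sqnorm d1 + sqnorm d2).
Proof.
move=> k3_ge0 eps0; rewrite !sqnormE -!big_split !mulr_sumr -big_split /=.
apply: ler_sum => i _; rewrite !mxE.
exact: dqf2_perturbed_le.
Qed.

End PerturbedLyapunov.

Section SublinearPowers.
Context {R : realType}.

Lemma powR_le_linear (b eta : R) : 0 < b < 1 -> 0 < eta ->
  exists C, forall s, 0 <= s -> s `^ b <= eta * s + C.
Proof.
move=> /andP[b0 b1] eta0.
(* Beyond [L] the ratio [s `^ b / s = s `^ (b - 1)] is below [eta]. *)
set L := eta `^ (b - 1)^-1.
have L0 : 0 < L by rewrite powR_gt0.
exists (L `^ b) => s s0; have [sL|Ls] := leP s L.
  have sbL : s `^ b <= L `^ b.
    by apply: ge0_ler_powR; rewrite ?nnegrE ?(ltW b0) ?(ltW L0).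
  by rewrite (le_trans sbL) // lerDr mulr_ge0 // ltW.
have s_gt0 : 0 < s by apply: lt_trans Ls.
have LbE : L `^ (b - 1) = eta.
  by rewrite /L -powRrM mulVf ?powRr1 ?ltW // subr_eq0 lt_eqF.
have sb1 : s `^ (b - 1) <= eta.
  rewrite -LbE -[b - 1]opprB !powRN lef_pV2 ?posrE ?powR_gt0 //.
  by apply: ge0_ler_powR; rewrite ?nnegrE ?subr_ge0 ?ltW.
have -> : s `^ b = s `^ (b - 1) * s.
  by rewrite -{3}(powRr1 (ltW s_gt0)) -powRD ?(gt_eqF s_gt0) ?implybT // subrK.
by rewrite (le_trans (ler_wpM2r (ltW s_gt0) sb1)) // lerDl powR_ge0.
Qed.

Lemma powR_dominated (a B al be b : R) : 0 < a -> 0 <= B -> 0 <= al -> 0 < b < 1 ->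
  exists K, forall Z s, 0 <= Z -> 0 <= s -> s <= al * Z + be ->
    B * s `^ b <= a * Z + K.
Proof.
move=> a0 B0 al0 b01.
set eta := a / (B * al + 1).
have Bal1 : 0 < B * al + 1 by rewrite ltr_wpDl ?mulr_ge0.
have eta0 : 0 < eta by rewrite divr_gt0.
have [C sbC] := powR_le_linear _ _ b01 eta0.
exists (B * (eta * be + C)) => Z s Z0 s0 sZ.
have Beta : B * eta * al <= a.
  by rewrite /eta mulrAC mulrA ler_pdivrMr // mulrC ler_pM2l // lerDl.
apply: (le_trans (ler_wpM2l B0 (sbC s s0))).
rewrite (le_trans (ler_wpM2l B0 (lerD (ler_wpM2l (ltW eta0) sZ) (lexx C)))) //.
have -> : B * (eta * (al * Z + be) + C) = B * eta * al * Z + B * (eta * be + C).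
  by ring.
by rewrite lerD2r ler_wpM2r.
Qed.

Lemma powR_sqr_mul (s e : R) : 0 <= s -> 2 * e + 1 != 0 ->
  (s `^ e) ^+ 2 * s = s `^ (2 * e + 1).
Proof.
move=> s0 e0; rewrite -powR_mulrn ?powR_ge0 // -powRrM.
by rewrite powRD ?(negbTE e0) // powRr1 // [e * _]mulrC.
Qed.

End SublinearPowers.

Section DifferentialInequality.
Context {R : realType}.
Variables (V dV : R -> R) (c K : R).
Hypothesis c_gt0 : 0 < c.
Hypothesis V_derive : forall t : R, 0 < t -> is_derive t 1 V (dV t).
Hypothesis V_decay : forall t : R, 0 < t -> dV t + c * V t <= K.

Let W (t : R) := (V t - K / c) * expR (c * t).

Let W_derive (t : R) : 0 < t -> is_derive t 1 W (expR (c * t) * (dV t + c * V t - K)).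
Proof.
move=> t_gt0.
have dlin : is_derive t 1 (fun s => c * s) c.
  by apply: is_derive_eq (is_deriveZ c (is_derive_id t 1)) _; rewrite /GRing.scale /= mulr1.
have dexp : is_derive t 1 (expR \o (fun s => c * s)) (expR (c * t) * c).
  exact: is_derive1_comp.
have dV' : is_derive t 1 (V - cst (K / c)) (dV t - 0) by apply: is_deriveB; exact: V_derive.
apply: is_derive_eq (is_deriveM dV' dexp) _.
by rewrite /GRing.scale /= !fctE /cst; field; rewrite gt_eqF.
Qed.

Let W_le1 (t : R) : 1 <= t -> W t <= W 1.
Proof.
move=> t1; rewrite -subr_le0.
have W_derivable : {in `[1, t], forall s, derivable W s 1}.
  move=> s; rewrite in_itv /= => /andP[s1 _].
  by have [] := W_derive _ (lt_le_trans ltr01 s1).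
have W_derive' s : s \in `]1, t[ -> is_derive s 1 W (expR (c * s) * (dV s + c * V s - K)).
  by rewrite in_itv /= => /andP[s1 _]; exact: W_derive _ (lt_trans ltr01 s1).
have [s + ->] := MVT_segment t1 W_derive' (derivable_within_continuous W_derivable).
rewrite in_itv /= => /andP[s1 _].
rewrite mulr_le0_ge0 ?subr_ge0 // mulr_ge0_le0 ?(ltW (expR_gt0 _)) // subr_le0.
exact: V_decay (lt_le_trans ltr01 s1).
Qed.

Lemma derive_decay_eventually_le :
  exists T, 0 <= T /\ forall t, T <= t -> V t <= K / c + 1.
Proof.
set D := `|V 1 - K / c| * expR c.
have D_ge0 : 0 <= D by rewrite mulr_ge0 ?(ltW (expR_gt0 _)).
exists (1 + D / c); split => [|t tT]; first by rewrite addr_ge0 ?ler01 ?divr_ge0 ?(ltW c_gt0).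
have t1 : 1 <= t by apply: le_trans tT; rewrite lerDl divr_ge0 ?(ltW c_gt0).
have WD : W t <= D.
  apply: le_trans (W_le1 _ t1) _.
  by rewrite /W mulr1 ler_wpM2r ?ler_norm ?(ltW (expR_gt0 _)).
(* [expR (c * t) >= 1 + c * t > D], so the weight forces [V t - K / c < 1]. *)
have Dct : D <= c * t.
  by rewrite -ler_pdivrMl // mulrC (le_trans _ tT) // lerDr.
have := expR_ge1Dx (c * t); have := expR_gt0 (c * t).
move: WD; rewrite /W => WD ept et.
have : (V t - K / c) * expR (c * t) <= 1 * expR (c * t) by lra.
rewrite ler_pM2r // => h; lra.
Qed.

End DifferentialInequality.

Lemma expo_sublinear {R : realType} (p : R) : 1 < p < 2 ->
  0 < 2 * expo p + 1 < 1 /\ 0 < 2 * (2 * expo p) + 1 < 1.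
Proof.
move=> /andP[p1 p2]; have d0 : 0 < 3 * p - 2 by lra.
have -> : 2 * expo p + 1 = p / (3 * p - 2) by rewrite /expo; field; rewrite gt_eqF.
have -> : 2 * (2 * expo p) + 1 = (2 - p) / (3 * p - 2).
  by rewrite /expo; field; rewrite gt_eqF.
by rewrite !divr_gt0 ?ltr_pdivrMr ?mul1r //; lra.
Qed.

Section NoisySystem.
Context {R : realType} {n : nat}.
Variables (k1 k2 k3 p : R).
Implicit Types (mu w : 'rV[R]_n).

Let c1 := 2 * k3 * (2 * p - 1) / (3 * p - 2).
Let c2 := p / (3 * p - 2).
Let g1 w := sqnorm w `^ expo p.
Let g2 w := sqnorm w `^ (2 * expo p).

(* In the coordinates [(k3 e1, e2)] the system is [k3 A*] perturbed by these
   terms, where [w = e1 + mu] is the measured output. *)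
Definition pert1 mu w : 'rV[R]_n := - (k1 * k3) *: (k3 *: mu + g1 w *: w).
Definition pert2 mu w : 'rV[R]_n :=
  - k2 *: (k3 ^+ 2 *: mu + (c1 * g1 w + c2 * g2 w) *: w).

Lemma noisy_field_decomposition (e1 e2 mu : 'rV[R]_n) :
  k3 *: (- k1 *: phi1 k3 p (e1 + mu) + e2)
    = k3 *: (- k1 *: (k3 *: e1) + e2) + pert1 mu (e1 + mu) /\
  - k2 *: phi2 k3 p (e1 + mu) = k3 *: (- k2 *: (k3 *: e1)) + pert2 mu (e1 + mu).
Proof.
by split; apply/rowP => i; rewrite !mxE /g1 /g2 /c1 /c2; ring.
Qed.

Lemma pert_sqnorm_le : 1 < p < 2 ->
  exists A B : R, [/\ 0 <= A, 0 <= B & forall mu w,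
    sqnorm (pert1 mu w) + sqnorm (pert2 mu w)
      <= A * sqnorm mu
         + B * (sqnorm w `^ (2 * expo p + 1) + sqnorm w `^ (2 * (2 * expo p) + 1))].
Proof.
move=> p12; have [/andP[b1 _] /andP[b2 _]] := expo_sublinear _ p12.
exists (2 * ((k1 * k3 ^+ 2) ^+ 2 + (k2 * k3 ^+ 2) ^+ 2)).
exists (2 * (k1 * k3) ^+ 2 + 4 * ((k2 * c1) ^+ 2 + (k2 * c2) ^+ 2)).
split=> [||mu w].
- by have := sqr_ge0 (k1 * k3 ^+ 2); have := sqr_ge0 (k2 * k3 ^+ 2); lra.
- by have := sqr_ge0 (k1 * k3); have := sqr_ge0 (k2 * c1); have := sqr_ge0 (k2 * c2); lra.
set s := sqnorm w; set X := sqnorm mu.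
have s0 : 0 <= s := sqnorm_ge0 w.
have G1 : g1 w ^+ 2 * s = s `^ (2 * expo p + 1) by rewrite powR_sqr_mul ?gt_eqF.
have G2 : g2 w ^+ 2 * s = s `^ (2 * (2 * expo p) + 1) by rewrite powR_sqr_mul ?gt_eqF.
have h1 := sqnormD_le (k3 *: mu) (g1 w *: w).
have h2 := sqnormD_le (k3 ^+ 2 *: mu) ((c1 * g1 w + c2 * g2 w) *: w).
rewrite !sqnormZ -/s -/X in h1 h2.
have h3 : (c1 * g1 w + c2 * g2 w) ^+ 2 * s
    <= 2 * (c1 ^+ 2 * (g1 w ^+ 2 * s)) + 2 * (c2 ^+ 2 * (g2 w ^+ 2 * s)).
  rewrite -subr_ge0.
  have -> : 2 * (c1 ^+ 2 * (g1 w ^+ 2 * s)) + 2 * (c2 ^+ 2 * (g2 w ^+ 2 * s))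
      - (c1 * g1 w + c2 * g2 w) ^+ 2 * s = (c1 * g1 w - c2 * g2 w) ^+ 2 * s by ring.
  by rewrite mulr_ge0 ?sqr_ge0.
rewrite /pert1 /pert2 !sqnormZ !sqrrN -G1 -G2.
have := ler_wpM2l (sqr_ge0 (k1 * k3)) h1; have := ler_wpM2l (sqr_ge0 k2) h2.
have := ler_wpM2l (sqr_ge0 k2) h3.
have := mulr_ge0 (sqr_ge0 (k2 * c1)) (mulr_ge0 (sqr_ge0 (g2 w)) s0).
have := mulr_ge0 (sqr_ge0 (k2 * c2)) (mulr_ge0 (sqr_ge0 (g1 w)) s0).
have := mulr_ge0 (sqr_ge0 (k1 * k3)) (mulr_ge0 (sqr_ge0 (g2 w)) s0).
lra.
Qed.

End NoisySystem.

Section NoisyLyapunov.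
Context {R : realType} {n : nat}.
Variables (k1 k2 k3 p qm : R) (P Q : 'M[R]_2).

Let V (e1 e2 : 'rV[R]_n) := lyapV P (k3 *: e1) e2.
Let dV (e1 e2 mu : 'rV[R]_n) := dlyapV P (k3 *: e1) e2
  (k3 *: (- k1 *: phi1 k3 p (e1 + mu) + e2)) (- k2 *: phi2 k3 p (e1 + mu)).
Let rate := k3 * qm / (4 * (`|P 0 0| + `|P 0 1| + `|P 1 1| + 1)).
Let gain := (P 0 0 ^+ 2 + 2 * P 0 1 ^+ 2 + P 1 1 ^+ 2 + 1) / (k3 * qm / 2).

Lemma is_derive_lyapV_solution (mu e1 e2 : R -> 'rV[R]_n) (t : R) :
  is_solution k1 k2 k3 p mu e1 e2 -> 0 < t ->
  is_derive t 1 (fun s => V (e1 s) (e2 s)) (dV (e1 t) (e2 t) (mu t)).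
Proof.
move=> sol t_gt0; apply: is_derive_lyapV => i; last by have [] := sol t t_gt0 i.
have [de1 _] := sol t t_gt0 i.
have -> : (fun s => (k3 *: e1 s) 0 i) = k3 *: (fun s => e1 s 0 i).
  by apply/funext => s; rewrite !mxE.
by rewrite mxE; apply: is_deriveZ.
Qed.

Hypotheses (k3_gt0 : 0 < k3) (qm_gt0 : 0 < qm) (P_sym : P 1 0 = P 0 1).
Hypothesis lyapPQ : (Astar k1 k2)^T *m P + P *m Astar k1 k2 = - Q.
Hypothesis Q_coercive : forall x y, qm * (x ^+ 2 + y ^+ 2) <= qf2 Q x y.

Lemma rate_gt0 : 0 < rate.
Proof. by rewrite divr_gt0 ?mulr_gt0 ?ltr_wpDl. Qed.

Lemma gain_ge0 : 0 <= gain.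
Proof.
rewrite divr_ge0 ?divr_ge0 ?mulr_ge0 ?ltW //.
by have := sqr_ge0 (P 0 0); have := sqr_ge0 (P 0 1); have := sqr_ge0 (P 1 1); lra.
Qed.

Lemma dV_rate_le e1 e2 mu :
  dV e1 e2 mu + rate * V e1 e2
    <= - (k3 * qm / 4) * (sqnorm (k3 *: e1) + sqnorm e2)
       + gain * (sqnorm (pert1 k1 k3 p mu (e1 + mu)) + sqnorm (pert2 k2 k3 p mu (e1 + mu))).
Proof.
rewrite /dV /V; have [-> ->] := noisy_field_decomposition k1 k2 k3 p e1 e2 mu.
have eps0 : 0 < k3 * qm / 2 by rewrite divr_gt0 ?mulr_gt0.
have := dlyapV_perturbed_le _ _ _ _ _ P_sym lyapPQ Q_coercive k3 (k3 * qm / 2)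
  (k3 *: e1) e2 (pert1 k1 k3 p mu (e1 + mu)) (pert2 k2 k3 p mu (e1 + mu)) (ltW k3_gt0) eps0.
rewrite -/gain; set Z := sqnorm (k3 *: e1) + sqnorm e2.
have : rate * lyapV P (k3 *: e1) e2 <= k3 * qm / 4 * Z.
  apply: le_trans (ler_wpM2l (ltW rate_gt0) (lyapV_le_norm P (k3 *: e1) e2)) _.
  rewrite mulrA ler_wpM2r ?addr_ge0 ?sqnorm_ge0 // /rate mulrAC ler_pdivrMr.
    set N := `|P 0 0| + `|P 0 1| + `|P 1 1|.
    have -> : k3 * qm / 4 * (4 * (N + 1)) = k3 * qm * (N + 1) by field.
    by apply: ler_wpM2l; rewrite ?lerDl // mulr_ge0 // ltW.
  by rewrite mulr_gt0 ?ltr_wpDl.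
lra.
Qed.

Lemma lyapV_decay (mb2 : R) : 1 < p < 2 ->
  exists c K, 0 < c /\ forall e1 e2 mu : 'rV[R]_n, sqnorm mu <= mb2 ->
    dV e1 e2 mu + c * V e1 e2 <= K.
Proof.
move=> p12; have [A [B [A0 B0 pertAB]]] := @pert_sqnorm_le _ n k1 k2 k3 p p12.
have [b1 b2] := expo_sublinear _ p12.
have a0 : 0 < k3 * qm / 8 by rewrite divr_gt0 ?mulr_gt0.
have al0 : 0 <= 2 / k3 ^+ 2 by rewrite divr_ge0 ?sqr_ge0.
have gB0 := mulr_ge0 gain_ge0 B0.
have [K1 dom1] := powR_dominated _ _ _ (2 * mb2) _ a0 gB0 al0 b1.
have [K2 dom2] := powR_dominated _ _ _ (2 * mb2) _ a0 gB0 al0 b2.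
exists rate, (gain * (A * mb2) + K1 + K2); split=> [|e1 e2 mu mub].
  exact: rate_gt0.
set Z := sqnorm (k3 *: e1) + sqnorm e2; set s := sqnorm (e1 + mu).
have Z0 : 0 <= Z by rewrite addr_ge0 ?sqnorm_ge0.
have s0 : 0 <= s by rewrite sqnorm_ge0.
have sZ : s <= 2 / k3 ^+ 2 * Z + 2 * mb2.
  have e1Z : 2 * sqnorm e1 <= 2 / k3 ^+ 2 * Z.
    rewrite mulrAC ler_pdivlMr ?exprn_gt0 // -mulrA ler_wpM2l ?ler0n //.
    by rewrite mulrC -sqnormZ lerDl sqnorm_ge0.
  by have := sqnormD_le e1 mu; rewrite -/s; lra.
have := dV_rate_le e1 e2 mu; rewrite -/Z.
have := ler_wpM2l gain_ge0 (pertAB mu (e1 + mu)); rewrite -/s.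
have := dom1 Z s Z0 s0 sZ; have := dom2 Z s Z0 s0 sZ.
have : gain * (A * sqnorm mu) <= gain * (A * mb2).
  by rewrite ler_wpM2l ?gain_ge0 // ler_wpM2l.
lra.
Qed.

End NoisyLyapunov.

Theorem corollary2 (R : realType) (n : nat) (p k1 k2 k3 mubar : R)
    (Q P : 'M[R]_2) (lminQ lmaxP lminP : R) :
  (1 <= n)%N -> 1 < p < 2 -> 0 < k3 -> 0 < k1 -> 0 < k2 ->
  hurwitz (Astar k1 k2) ->
  posdef Q -> posdef P ->
  (Astar k1 k2)^T *m P + P *m Astar k1 k2 = - Q ->
  is_lambda_min Q lminQ -> is_lambda_max P lmaxP -> is_lambda_min P lminP ->
  lmaxP / lminP <= k3 * lminQ / lmaxP ->
  PFTS n k1 k2 k3 p mubar.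
Proof.
move=> _ p12 k3_gt0 k1_gt0 k2_gt0 _ Q_pos P_pos lyapPQ _ _ _ _.
have [pm pm_gt0 P_coercive] := posdef2_coercive _ P_pos.
have [qm qm_gt0 Q_coercive] := posdef2_coercive _ Q_pos.
have [c [K [c_gt0 decay]]] := @lyapV_decay R n k1 k2 k3 p qm P Q k3_gt0 qm_gt0
  (posdef2_sym _ P_pos) lyapPQ Q_coercive (mubar ^+ 2) p12.
exists (Num.sqrt ((K / c + 1) / (pm * Num.min (k3 ^+ 2) 1)) + 1).
split=> [|mu mu_le e1 e2 sol]; first by rewrite ltr_wpDl ?sqrtr_ge0.
have [T [T_ge0 VT]] := derive_decay_eventually_le _ _ _ _ c_gt0
  (fun t => is_derive_lyapV_solution k1 k2 k3 p P _ _ _ t sol)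
  (fun t t_gt0 => decay _ _ _ (sqnorm_le_sqr _ _ (mu_le t (ltW t_gt0)))).
exists T; split=> // t tT.
have bound := state_norm_le k3 pm (K / c + 1) (e1 t) (e2 t) (lt0r_neq0 k3_gt0) pm_gt0.
apply: le_trans (bound _) _; last by rewrite lerDl.
exact: le_trans (lyapV_ge_norm P _ (k3 *: e1 t) (e2 t) P_coercive) (VT t tT).
Qed.
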